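(* Let $P,F,A_I,A_O,B_I,B_O,E_A,E_B$ be finite-dimensional Hilbert spaces with $d_{A_I}=d_{A_O}=:d_A$, $d_{B_I}=d_{B_O}=:d_B$, $d_P=d_F=d_Ad_{E_A}=d_Bd_{E_B}$. Let $(\Pi_A,\Phi_A)$ and $(\Pi_B,\Phi_B)$ be consistent frame functions for Alice and Bob, i.e. for all unitaries $U_A:A_I\to A_O$, $U_B:B_I\to B_O$, $\Phi_A(U_B)(U_A\otimes\mathbb{1}^{E_A})\Pi_A(U_B)=\Phi_B(U_A)(U_B\otimes\mathbb{1}^{E_B})\Pi_B(U_A)=:\mathcal{G}(U_A,U_B)$. Let $\{U_i\}_{i=1}^{d_A^2}$, $\{V_j\}_{j=1}^{d_B^2}$ be orthonormal bases of unitaries $A_I\to A_O$ and $B_I\to B_O$, and let $|w\rangle=\frac{1}{d_Ad_B}\sum_{i,j}|\mathcal{G}(U_i,V_j)\rangle\!\rangle^{PF}|U_i^*\rangle\!\rangle^{A_IA_O}|V_j^*\rangle\!\rangle^{B_IB_O}$ be the corresponding process vector. Let $E_I,E_O$ be Hilbert spaces isomorphic to $E_A$. Then $$|w\rangle=\frac{1}{d_B}\,\langle\!\langle\mathbb{1}|^{E_IE_O}\sum_j|\Pi_A(V_j)\rangle\!\rangle^{P,A_IE_I}\,|\Phi_A(V_j)\rangle\!\rangle^{A_OE_O,F}\,|V_j^*\rangle\!\rangle^{B_IB_O}.$$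
   Context: A frame function for Alice is a pair $(\Pi_A,\Phi_A)$ of functions sending linear maps $T_B:B_I\to B_O$ to linear maps $\Pi_A(T_B):P\to A_I\otimes E_A$ and $\Phi_A(T_B):A_O\otimes E_A\to F$, unitary whenever $T_B$ is unitary; Bob's frame function is defined symmetrically with $\Pi_B(T_A):P\to B_I\otimes E_B$, $\Phi_B(T_A):B_O\otimes E_B\to F$. All spaces have fixed computational bases. For a linear map $K:X\to Y$, $|K\rangle\!\rangle^{X,Y}=\sum_i|i\rangle^X\otimes(K|i\rangle)^Y\in X\otimes Y$ (so $|\Pi_A(V)\rangle\!\rangle^{P,A_IE_I}\in P\otimes A_I\otimes E_I$ with the output $E_A$ identified with $E_I$, and $|\Phi_A(V)\rangle\!\rangle^{A_OE_O,F}\in A_O\otimes E_O\otimes F$ with the input $E_A$ identified with $E_O$); $K^*$ is entrywise complex conjugation. $\langle\!\langle\mathbb{1}|^{E_IE_O}$ denotes the bra of $|\mathbb{1}\rangle\!\rangle^{E_IE_O}=\sum_e|e\rangle^{E_I}|e\rangle^{E_O}$ applied (partial inner product) to the $E_I,E_O$ tensor factors, leaving the others. An orthonormal basis of unitaries $X\to Y$ ($d=\dim X=\dim Y$) is a set of $d^2$ unitaries $U_i$ with $\{|U_i\rangle\!\rangle\}$ a basis of $X\otimes Y$ and $\langle\!\langle U_i|U_j\rangle\!\rangle=d\,\delta_{ij}$. *)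

From mathcomp Require Import all_boot all_order all_algebra all_field.
From mathcomp Require Import mxtens.
Set Implicit Arguments. Unset Strict Implicit. Unset Printing Implicit Defensive.
Import Order.TTheory GRing.Theory Num.Theory.
Local Open Scope ring_scope.

(* A linear map K : X -> Y between spaces with fixed
   computational bases (dims dX, dY) is a matrix 'M[algC]_(dY, dX) acting on
   column vectors: K|i> is the i-th column, i.e. <y|K|i> = K y i.
   Tensor products X (x) Y are indexed by 'I_(dX * dY) through
   [mxtens_index (x, y)], and tensmx is the Kronecker product. *)

Definition mxconj m n (K : 'M[algC]_(m, n)) : 'M[algC]_(m, n) :=
  \matrix_(i, j) (K i j)^*.

Definition adjmx m n (K : 'M[algC]_(m, n)) : 'M[algC]_(n, m) := (mxconj K)^T.

Definition unitary m n (K : 'M[algC]_(m, n)) : Prop :=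
  adjmx K *m K = 1%:M /\ K *m adjmx K = 1%:M.

(* |K>>^{X,Y} = sum_i |i>^X (K|i>)^Y ; component at (x, y) *)
Definition dket m n (K : 'M[algC]_(m, n)) (x : 'I_n) (y : 'I_m) : algC := K y x.

Definition hs_inner m n (K L : 'M[algC]_(m, n)) : algC :=
  \sum_(x < n) \sum_(y < m) (dket K x y)^* * dket L x y.

Definition unitary_onb d (U : 'I_(d ^ 2) -> 'M[algC]_d) : Prop :=
  (forall i, unitary (U i))
  /\ row_free (\matrix_(i < d ^ 2) mxvec (U i))
  /\ (forall i j, hs_inner (U i) (U j) = d%:R * (i == j)%:R).

(* Frame function of Alice: (Pi_A, Phi_A) with
   Pi_A(T_B) : P -> A_I (x) E_A,   Phi_A(T_B) : A_O (x) E_A -> F,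
   unitary whenever T_B : B_I -> B_O is unitary. *)
Definition frame_function (dP dF dX eX dY : nat)
  (Pi : 'M[algC]_dY -> 'M[algC]_(dX * eX, dP))
  (Phi : 'M[algC]_dY -> 'M[algC]_(dF, dX * eX)) : Prop :=
  forall T, unitary T -> unitary (Pi T) /\ unitary (Phi T).

Definition frame_map (dP dF dX eX dY : nat)
  (Pi : 'M[algC]_dY -> 'M[algC]_(dX * eX, dP))
  (Phi : 'M[algC]_dY -> 'M[algC]_(dF, dX * eX))
  (U : 'M[algC]_dX) (T : 'M[algC]_dY) : 'M[algC]_(dF, dP) :=
  Phi T *m (tensmx U (1%:M : 'M[algC]_eX)) *m Pi T.

From mathcomp Require Import all_boot all_order all_algebra all_field.
From mathcomp Require Import mxtens.
Import Order.TTheory GRing.Theory Num.Theory.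
Local Open Scope ring_scope.

(* Only Alice's description G(U_i, V_j) = Phi_A(V_j) (U_i (x) 1) Pi_A(V_j) is
   needed.  Its (f, p) entry is linear in U_i: it equals sum_(x,y) U_i[x,y] K_j[x,y],
   where K_j is the contraction of Phi_A(V_j) with Pi_A(V_j) over E_A.  The d_A^2
   orthogonal unitaries U_i of Hilbert-Schmidt norm d_A are complete, i.e.
   sum_i U_i[x,y] (U_i[a,b])^* = d_A [x = a][y = b], so summing against U_i^*
   returns d_A K_j[a,b], and d_A cancels in the normalisation 1/(d_A d_B). *)

Lemma big_mxtens_index (R : Type) (idx : R) (op : Monoid.com_law idx)
    m n (F : 'I_(m * n) -> R) :
  \big[op/idx]_k F k = \big[op/idx]_i \big[op/idx]_j F (mxtens_index (i, j)).
Proof.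
rewrite pair_big (reindex (@mxtens_index m n)) /=; last first.
  by exists (@mxtens_unindex m n) => k _; rewrite (mxtens_indexK, mxtens_unindexK).
by apply: eq_bigr => -[i j].
Qed.

Lemma mul_tensmx1E (R : comPzRingType) m n e p q (Phi : 'M[R]_(p, m * e))
    (T : 'M[R]_(m, n)) (Pi : 'M[R]_(n * e, q)) f r :
  (Phi *m tensmx T (1%:M : 'M_e) *m Pi) f r
  = \sum_x \sum_y T x y * \sum_k Phi f (mxtens_index (x, k)) * Pi (mxtens_index (y, k)) r.
Proof.
have PhiT_E y k : (Phi *m tensmx T 1%:M) f (mxtens_index (y, k))
    = \sum_x Phi f (mxtens_index (x, k)) * T x y.
  rewrite mxE big_mxtens_index; apply: eq_bigr => x _.
  rewrite (bigD1 k) //= big1 ?addr0 => [|l /negbTE lk]; last first.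
    by rewrite tensmxE mxE lk mulr0n mulr0 mulr0.
  by rewrite tensmxE mxE eqxx mulr1.
rewrite mxE big_mxtens_index exchange_big /=.
under eq_bigr do under eq_bigr do rewrite PhiT_E big_distrl /=.
under eq_bigr do rewrite exchange_big /=.
rewrite exchange_big /=; apply: eq_bigr => x _; rewrite exchange_big /=.
by apply: eq_bigr => y _; rewrite big_distrr; apply: eq_bigr => k _; rewrite mulrAC mulrC.
Qed.

Section OrthonormalUnitaries.

Variables (d : nat) (U : 'I_(d ^ 2) -> 'M[algC]_d).
Hypothesis U_orthonormal : forall i j, hs_inner (U i) (U j) = d%:R * (i == j)%:R.

Lemma hs_orthonormal_complete (a b c e : 'I_d) :
  \sum_i U i a b * (U i c e)^* = d%:R * ((a == c) && (b == e))%:R.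
Proof.
have d_neq0 : d%:R != 0 :> algC by rewrite pnatr_eq0 -lt0n (leq_ltn_trans _ (ltn_ord a)).
pose M : 'M[algC]_(d * d) := \matrix_(i, k) U i (mxtens_unindex k).1 (mxtens_unindex k).2.
have rowsM : mxconj M *m (d%:R^-1 *: M^T) = 1%:M.
  apply/matrixP => i j; rewrite -scalemxAr !mxE big_mxtens_index exchange_big /=.
  under eq_bigr do under eq_bigr do rewrite !mxE !mxtens_indexK.
  by rewrite -[X in _ * X]/(hs_inner (U i) (U j)) U_orthonormal mulrA mulVf // mul1r.
(* M is square, so its orthonormal rows force orthonormal columns. *)
have /matrixP/(_ (mxtens_index (a, b)) (mxtens_index (c, e))) := mulmx1C rowsM.
rewrite -scalemxAl !mxE (inj_eq (can_inj (@mxtens_indexK d d))) xpair_eqE.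
under eq_bigr do rewrite !mxE !mxtens_indexK.
by move=> <-; rewrite mulrA mulfV // mul1r.
Qed.

Lemma hs_orthonormal_expand (K : 'I_d -> 'I_d -> algC) (a b : 'I_d) :
  \sum_i (\sum_x \sum_y U i x y * K x y) * (U i a b)^* = d%:R * K a b.
Proof.
under eq_bigr do rewrite big_distrl; rewrite exchange_big /=.
under eq_bigr do (under eq_bigr do rewrite big_distrl; rewrite exchange_big /=).
under eq_bigr do under eq_bigr do
  (under eq_bigr do rewrite mulrAC; rewrite -big_distrl /= hs_orthonormal_complete).
rewrite (bigD1 a) //= [X in _ + X]big1 ?addr0 => [|x /negbTE xa]; last first.
  by apply: big1 => y _; rewrite xa mulr0 mul0r.
rewrite (bigD1 b) //= [X in _ + X]big1 ?addr0 => [|y /negbTE yb]; last first.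
  by rewrite yb andbF mulr0 mul0r.
by rewrite !eqxx mulr1.
Qed.

End OrthonormalUnitaries.

Theorem theorem3
  (dP dF dA dB eA eB : nat)
  (hPF : dP = dF) (hFA : dF = (dA * eA)%N) (hFB : dF = (dB * eB)%N)
  (PiA : 'M[algC]_dB -> 'M[algC]_(dA * eA, dP))
  (PhiA : 'M[algC]_dB -> 'M[algC]_(dF, dA * eA))
  (PiB : 'M[algC]_dA -> 'M[algC]_(dB * eB, dP))
  (PhiB : 'M[algC]_dA -> 'M[algC]_(dF, dB * eB))
  (hA : frame_function PiA PhiA)
  (hB : frame_function PiB PhiB)
  (hcons : forall (UA : 'M[algC]_dA) (UB : 'M[algC]_dB),
      unitary UA -> unitary UB ->
      frame_map PiA PhiA UA UB = frame_map PiB PhiB UB UA)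
  (U : 'I_(dA ^ 2) -> 'M[algC]_dA) (V : 'I_(dB ^ 2) -> 'M[algC]_dB)
  (hU : unitary_onb U) (hV : unitary_onb V)
  (w : 'I_dP -> 'I_dF -> 'I_dA -> 'I_dA -> 'I_dB -> 'I_dB -> algC)
  (hw : forall p f ai ao bi bo,
      w p f ai ao bi bo =
      (dA%:R * dB%:R)^-1 *
      \sum_(i < dA ^ 2) \sum_(j < dB ^ 2)
        dket (frame_map PiA PhiA (U i) (V j)) p f
        * dket (mxconj (U i)) ai ao * dket (mxconj (V j)) bi bo) :
  forall p f ai ao bi bo,
    w p f ai ao bi bo =
    dB%:R^-1 *
    \sum_(j < dB ^ 2) \sum_(e < eA)
      dket (PiA (V j)) p (mxtens_index (ai, e))
      * dket (PhiA (V j)) (mxtens_index (ao, e)) f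
      * dket (mxconj (V j)) bi bo.
Proof.
move=> p f ai ao bi bo; rewrite hw /dket /frame_map exchange_big /=.
have [_ [_ orthoU]] := hU.
have dA_neq0 : dA%:R != 0 :> algC by rewrite pnatr_eq0 -lt0n (leq_ltn_trans _ (ltn_ord ai)).
under eq_bigr do rewrite -big_distrl /=.
under eq_bigr do under eq_bigr do rewrite mul_tensmx1E mxE.
under eq_bigr => j _.
  rewrite (hs_orthonormal_expand _ _ orthoU
    (fun x y => \sum_k PhiA (V j) f (mxtens_index (x, k)) * PiA (V j) (mxtens_index (y, k)) p)).
  by rewrite -mulrA; over.
rewrite -big_distrr /= mulrA invfM [_ * dA%:R]mulrAC mulVf // mul1r.
congr (_ * _); apply: eq_bigr => j _; rewrite big_distrl.
by apply: eq_bigr => k _; rewrite [_ * PiA _ _ _]mulrC.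
Qed.
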